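(* Let $q\in\mathbb{C}$, $|q|<1$, $\mathbf{s}=(s_1,\dots,s_d)\in\mathbb{N}^d$, $w=|\mathbf{s}|$. Define the power series $F_{\mathrm{I}}(t)=\mathbf{R}^{s_1-1}\mathbf{P}[\mathbf{y}\,\mathbf{R}^{s_2-1}\mathbf{P}[\mathbf{y}\cdots\mathbf{R}^{s_d-1}\mathbf{P}[\mathbf{y}]\cdots]](t)$, $F_{\mathrm{II}}(t)=\mathbf{R}^{s_1}[\mathbf{y}\,\mathbf{R}^{s_2}[\mathbf{y}\cdots\mathbf{R}^{s_d}[\mathbf{y}]\cdots]](t)$, $F_{\mathrm{III}}(t)=\mathbf{P}^{s_1-1}\mathbf{R}[\mathbf{y}\,\mathbf{P}^{s_2}[\mathbf{y}\cdots\mathbf{P}^{s_d}[\mathbf{y}]\cdots]](t)$, $F_{\mathrm{IV}}(t)=\mathbf{R}^{s_1-1}\mathbf{P}[\mathbf{y}\,\mathbf{R}^{s_2}[\mathbf{y}\cdots\mathbf{R}^{s_d}[\mathbf{y}]\cdots]](t)$. Then $\mathfrak{z}_q^{\mathfrak{t}}[\mathbf{s}]=F_{\mathfrak{t}}(1)$ and $\zeta_q^{\mathfrak{t}}[\mathbf{s}]=(1-q)^wF_{\mathfrak{t}}(1)$ for $\mathfrak{t}=\mathrm{II},\mathrm{III}$, and also for $\mathfrak{t}=\mathrm{I},\mathrm{IV}$ when $s_1\ge2$. Moreover, the analogous statements hold for the regularized values of types $\widetilde{\mathrm{I}}$ and $\widetilde{\mathrm{IV}}$: in $F_{\mathrm{I}}$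 one may replace any of the operator blocks $\mathbf{R}^{s_j-1}\mathbf{P}$ by a single $\mathbf{R}$, and in $F_{\mathrm{IV}}$ one may replace the block $\mathbf{R}^{s_1-1}\mathbf{P}$ by a single $\mathbf{R}$; the value at $t=1$ then equals $\mathfrak{z}_q^{\mathbf{t}}[\mathbf{s}']$ where at each replaced position $j$ the entry becomes $(t_j,s'_j)=(1,1)$ and the other entries $(t_j,s'_j)$ are as for type I (resp. IV).
   Context: $\mathfrak{z}_q^{\mathbf{t}}[\mathbf{s}]=\sum_{k_1>\dots>k_d>0}\prod_j\frac{q^{k_jt_j}}{(1-q^{k_j})^{s_j}}$, $\zeta_q^{\mathbf{t}}[\mathbf{s}]=(1-q)^{|\mathbf{s}|}\mathfrak{z}_q^{\mathbf{t}}[\mathbf{s}]$. Types: $\mathfrak{z}_q^{\mathrm{I}}[\mathbf{s}]=\mathfrak{z}_q^{(s_1-1,\dots,s_d-1)}[\mathbf{s}]$, $\mathfrak{z}_q^{\mathrm{II}}[\mathbf{s}]=\mathfrak{z}_q^{(s_1,\dots,s_d)}[\mathbf{s}]$, $\mathfrak{z}_q^{\mathrm{III}}[\mathbf{s}]=\mathfrak{z}_q^{(1,0,\dots,0)}[\mathbf{s}]$, $\mathfrak{z}_q^{\mathrm{IV}}[\mathbf{s}]=\mathfrak{z}_q^{(s_1-1,s_2,\dots,s_d)}[\mathbf{s}]$, similarly for $\zeta_q$. Operators on power series in $t$ without constant term: $\mathbf{P}[f](t)=\sum_{k\ge0}f(q^kt)$, $\mathbf{R}[f](t)=\sum_{k\ge1}f(q^kt)$,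 powers are compositions; $\mathbf{y}$ is multiplication by $\mathbf{y}(t)=t/(1-t)$ (innermost: the function itself). *)

From Stdlib Require Import Reals List.
From Coquelicot Require Import Coquelicot.
Open Scope C_scope.

(** Formal power series in t, represented by their coefficient sequences
    (a n = coefficient of t^n).  All series below have no constant term,
    except the auxiliary unit series [one] used to start the nesting. *)
Definition ps := nat -> C.

Fixpoint sumC (f : nat -> C) (n : nat) : C :=
  match n with O => 0 | S m => sumC f m + f m end.

Definition qpow (q : C) (n : nat) : C := pow_n q n.

(** P[f](t) = sum_{k>=0} f(q^k t):  t^n |-> t^n / (1 - q^n)  (n >= 1) *)
Definition Pop (q : C) (a : ps) : ps :=
  fun n => match n with O => 0 | _ => a n / (1 - qpow q n) end.

(** R[f](t) = sum_{k>=1} f(q^k t):  t^n |-> q^n t^n / (1 - q^n)  (n >= 1) *)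
Definition Rop (q : C) (a : ps) : ps :=
  fun n => match n with O => 0 | _ => a n * qpow q n / (1 - qpow q n) end.

Definition opow (k : nat) (T : ps -> ps) : ps -> ps := Nat.iter k T.

Definition one : ps := fun n => match n with O => 1 | _ => 0 end.

(** multiplication by y(t) = t/(1-t) = sum_{j>=1} t^j :
    (y a)_n = sum_{m<n} a_m ; in particular y * one = y. *)
Definition ymul (a : ps) : ps := fun n => sumC a n.

Fixpoint build (bs : list (ps -> ps)) : ps :=
  match bs with
  | nil => one
  | b :: rest => b (ymul (build rest))
  end.

Definition value_at_1 (a : ps) (z : C) : Prop := is_series a z.

(** truncated multiple q-sum
    sum_{N > k1 > ... > kd > 0} prod_j q^{k_j t_j} / (1 - q^{k_j})^{s_j},
    for the list of pairs [(t1,s1);...;(td,sd)]. *)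
Definition qterm (q : C) (t s k : nat) : C :=
  qpow q (k * t) / pow_n (1 - qpow q k) s.

Fixpoint qtrunc (q : C) (ts : list (nat * nat)) (N : nat) : C :=
  match ts with
  | nil => 1
  | (t, s) :: rest =>
      sumC (fun k => match k with
                     | O => 0
                     | _ => qterm q t s k * qtrunc q rest k
                     end) N
  end.

Definition frakz_is (q : C) (ts : list (nat * nat)) (z : C) : Prop :=
  filterlim (qtrunc q ts) eventually (locally z).

Definition weight (ts : list (nat * nat)) : nat := fold_right (fun p w => (snd p + w)%nat) O ts.

Definition zeta_is (q : C) (ts : list (nat * nat)) (z : C) : Prop :=
  filterlim (fun N => pow_n (1 - q) (weight ts) * qtrunc q ts N) eventually (locally z).

Definition type_claim (q : C) (ts : list (nat * nat)) (F : ps) : Prop :=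
  exists z : C, value_at_1 F z /\ frakz_is q ts z /\
                zeta_is q ts (pow_n (1 - q) (weight ts) * z).

Definition blockI (q : C) (s : nat) : ps -> ps := fun a => opow (s - 1) (Rop q) (Pop q a).
Definition blockII (q : C) (s : nat) : ps -> ps := opow s (Rop q).
Definition blockIII1 (q : C) (s : nat) : ps -> ps := fun a => opow (s - 1) (Pop q) (Rop q a).
Definition blockIII (q : C) (s : nat) : ps -> ps := opow s (Pop q).

Definition tI (s : list nat) := map (fun x => (x - 1, x)%nat) s.
Definition tII (s : list nat) := map (fun x => (x, x)) s.

Definition tIreg (s : list nat) (rep : list bool) : list (nat * nat) :=
  map (fun p : nat * bool => if snd p then (1, 1)%nat else (fst p - 1, fst p)%nat)
      (combine s rep).
Definition FIreg (q : C) (s : list nat) (rep : list bool) : ps :=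
  build (map (fun p : nat * bool => if snd p then Rop q else blockI q (fst p))
             (combine s rep)).

From Pilot Require Import Defs.
From Stdlib Require Import Reals List Lia Lra.
From Coquelicot Require Import Coquelicot.
Open Scope C_scope.

(* Every operator block B_j (a composite of P and R) multiplies the coefficient
   of t^n by q^(n t_j) / (1 - q^n)^(s_j) and kills the constant term, while
   multiplication by y = t/(1-t) replaces coefficients by partial sums.  Hence
   the partial sums at t = 1 of the nested series are exactly the truncations
   k_1 < N of the multiple q-sum, so both limits exist together and agree.
   Convergence for t_1 >= 1: the inner truncations grow at most like c^N for
   every c > 1, since each factor is bounded by (1 - |q|)^(-s_j), and the
   outer factor q^(n t_1) decays like |q|^n. *)

Lemma pow_n_neq0 (z : C) k : z <> 0 -> (pow_n z k : C) <> 0.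
Proof.
  intros Hz. apply Cmod_gt_0. change (0 < Cmod (z ^ k))%R.
  rewrite Cmod_pow. apply pow_lt. now apply Cmod_gt_0.
Qed.

Lemma sumC_ext f g n : (forall k, f k = g k) -> sumC f n = sumC g n.
Proof. intros E. induction n as [|n IH]; simpl; congruence. Qed.

Lemma sum_n_sumC (a : nat -> C) N : sum_n a N = sumC a (S N).
Proof.
  induction N as [|N IH]; [rewrite sum_O; simpl; ring|].
  rewrite sum_Sn, IH. reflexivity.
Qed.

Lemma filterlim_of_succ {T : UniformSpace} (f : nat -> T) (z : T) :
  filterlim (fun N => f (S N)) eventually (locally z) ->
  filterlim f eventually (locally z).
Proof.
  intros H P HP. destruct (H P HP) as [M HM].
  exists (S M). intros [|n] Hn; [lia|]. apply HM. lia.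
Qed.

Lemma Cmod_sumC_le_geometric (f : nat -> C) (M c : R) : (0 <= M)%R ->
  (forall k, Cmod (f k) <= M * (c - 1) * c ^ k)%R ->
  forall n, (Cmod (sumC f n) <= M * c ^ n)%R.
Proof.
  intros HM Hf n. induction n as [|n IH]; simpl sumC.
  - rewrite Cmod_0. simpl. lra.
  - eapply Rle_trans; [apply Cmod_triangle|].
    specialize (Hf n). simpl. nra.
Qed.

Section NestedSeries.
Variable q : C.
Hypothesis hq : (Cmod q < 1)%R.

Lemma Cmod_qpow_le n : (1 <= n)%nat -> (Cmod (qpow q n) <= Cmod q)%R.
Proof.
  intros Hn. unfold qpow. change (Cmod (q ^ n) <= Cmod q)%R. rewrite Cmod_pow.
  destruct n as [|n]; [lia|]. simpl.
  pose proof (Cmod_ge_0 q).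
  assert (Cmod q ^ n <= 1)%R by (rewrite <- (pow1 n); apply pow_incr; lra).
  nra.
Qed.

Lemma one_sub_qpow_neq0 n : (1 <= n)%nat -> 1 - qpow q n <> 0.
Proof.
  intros Hn E. pose proof (Cmod_qpow_le n Hn) as Hle.
  replace (qpow q n) with (RtoC 1) in Hle
    by (replace (qpow q n) with (1 - (1 - qpow q n)) by ring; rewrite E; ring).
  rewrite Cmod_1 in Hle. lra.
Qed.

Lemma qterm_mul t s t' s' n : (1 <= n)%nat ->
  qterm q t s n * qterm q t' s' n = qterm q (t + t') (s + s') n.
Proof.
  intros Hn. pose proof (one_sub_qpow_neq0 n Hn) as H.
  pose proof (pow_n_neq0 _ s H). pose proof (pow_n_neq0 _ s' H).
  unfold qterm, qpow in *. rewrite Nat.mul_add_distr_l, !pow_n_plus.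
  change mult with Cmult. field. auto.
Qed.

Definition acts_by_qterm (B : ps -> ps) (ts : nat * nat) : Prop :=
  forall a, B a O = 0 /\
            forall n, (1 <= n)%nat -> B a n = qterm q (fst ts) (snd ts) n * a n.

Lemma acts_by_qterm_ext B B' ts :
  (forall a, B a = B' a) -> acts_by_qterm B ts -> acts_by_qterm B' ts.
Proof. intros E H a. rewrite <- E. apply H. Qed.

Lemma Rop_acts : acts_by_qterm (Rop q) (1, 1)%nat.
Proof.
  intros a. split; [reflexivity|]. intros [|n] Hn; [lia|].
  pose proof (one_sub_qpow_neq0 (S n) Hn).
  change (a (S n) * qpow q (S n) / (1 - qpow q (S n))
          = qpow q (S n * 1) / pow_n (1 - qpow q (S n)) 1 * a (S n)).
  rewrite Nat.mul_1_r.
  change (pow_n (1 - qpow q (S n)) 1) with ((1 - qpow q (S n)) * 1). field. auto.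
Qed.

Lemma Pop_acts : acts_by_qterm (Pop q) (0, 1)%nat.
Proof.
  intros a. split; [reflexivity|]. intros [|n] Hn; [lia|].
  pose proof (one_sub_qpow_neq0 (S n) Hn).
  change (a (S n) / (1 - qpow q (S n))
          = qpow q (S n * 0) / pow_n (1 - qpow q (S n)) 1 * a (S n)).
  rewrite Nat.mul_0_r.
  change (qpow q 0 / pow_n (1 - qpow q (S n)) 1) with (1 / ((1 - qpow q (S n)) * 1)).
  field. auto.
Qed.

Lemma acts_by_qterm_comp B B' ts ts' :
  acts_by_qterm B ts -> acts_by_qterm B' ts' ->
  acts_by_qterm (fun a => B (B' a)) (fst ts + fst ts', snd ts + snd ts')%nat.
Proof.
  intros H H' a. destruct (H (B' a)) as [H0 HS]. split; [exact H0|].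
  intros n Hn. simpl. rewrite HS, (proj2 (H' a)), Cmult_assoc, qterm_mul by lia.
  reflexivity.
Qed.

Lemma acts_by_qterm_iter T B k t s ts :
  acts_by_qterm T (t, s) -> acts_by_qterm B ts ->
  acts_by_qterm (fun a => opow k T (B a)) (k * t + fst ts, k * s + snd ts)%nat.
Proof.
  intros HT HB. induction k as [|k IH]; [exact HB|].
  replace (S k * t + fst ts)%nat with (t + (k * t + fst ts))%nat by lia.
  replace (S k * s + snd ts)%nat with (s + (k * s + snd ts))%nat by lia.
  exact (acts_by_qterm_comp _ _ _ _ HT IH).
Qed.

Lemma blockI_acts s : (1 <= s)%nat -> acts_by_qterm (blockI q s) (s - 1, s)%nat.
Proof.
  intros Hs. replace (s - 1, s)%nat with ((s - 1) * 1 + 0, (s - 1) * 1 + 1)%nat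
    by (f_equal; lia).
  exact (acts_by_qterm_iter _ _ (s - 1) _ _ _ Rop_acts Pop_acts).
Qed.

Lemma blockII_acts s : (1 <= s)%nat -> acts_by_qterm (blockII q s) (s, s).
Proof.
  intros Hs. replace (s, s) with ((s - 1) * 1 + 1, (s - 1) * 1 + 1)%nat
    by (f_equal; lia).
  apply (acts_by_qterm_ext (fun a => opow (s - 1) (Rop q) (Rop q a))).
  - intros a. destruct s as [|s]; [lia|]. rewrite Nat.sub_succ, Nat.sub_0_r.
    symmetry. apply Nat.iter_succ_r.
  - exact (acts_by_qterm_iter _ _ (s - 1) _ _ _ Rop_acts Rop_acts).
Qed.

Lemma blockIII1_acts s : (1 <= s)%nat -> acts_by_qterm (blockIII1 q s) (1, s)%nat.
Proof.
  intros Hs. replace (1, s)%nat with ((s - 1) * 0 + 1, (s - 1) * 1 + 1)%nat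
    by (f_equal; lia).
  exact (acts_by_qterm_iter _ _ (s - 1) _ _ _ Pop_acts Rop_acts).
Qed.

Lemma blockIII_acts s : (1 <= s)%nat -> acts_by_qterm (blockIII q s) (0, s)%nat.
Proof.
  intros Hs. replace (0, s)%nat with ((s - 1) * 0 + 0, (s - 1) * 1 + 1)%nat
    by (f_equal; lia).
  apply (acts_by_qterm_ext (fun a => opow (s - 1) (Pop q) (Pop q a))).
  - intros a. destruct s as [|s]; [lia|]. rewrite Nat.sub_succ, Nat.sub_0_r.
    symmetry. apply Nat.iter_succ_r.
  - exact (acts_by_qterm_iter _ _ (s - 1) _ _ _ Pop_acts Pop_acts).
Qed.

Lemma sumC_build bs ts : Forall2 acts_by_qterm bs ts ->
  forall N, (1 <= N)%nat -> sumC (build bs) N = qtrunc q ts N.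
Proof.
  induction 1 as [|B [t s] bs ts HB Hbs IH]; intros N HN.
  - destruct N as [|N]; [lia|]. clear HN. change (sumC Defs.one (S N) = 1).
    induction N as [|N IHN]; [simpl; ring|].
    change (sumC Defs.one (S N) + 0 = 1). rewrite IHN. ring.
  - simpl. apply sumC_ext. intros [|k]; [apply HB|].
    rewrite (proj2 (HB _)) by lia. unfold ymul. rewrite IH by lia. reflexivity.
Qed.

Lemma frakz_is_of_value_at_1 bs ts z : Forall2 acts_by_qterm bs ts ->
  value_at_1 (build bs) z -> frakz_is q ts z.
Proof.
  intros H Hz. apply filterlim_of_succ.
  eapply filterlim_ext; [|exact Hz]. intros N. simpl.
  rewrite sum_n_sumC. apply sumC_build; [exact H | lia].
Qed.

Lemma zeta_is_of_frakz_is ts z :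
  frakz_is q ts z -> zeta_is q ts (pow_n (1 - q) (weight ts) * z).
Proof.
  intros H. exact (filterlim_comp _ _ _ _
    (fun x : C_NormedModule => scal (pow_n (1 - q) (weight ts) : C) x) _ _ _
    H (filterlim_scal_r _ _)).
Qed.

Lemma Cmod_one_sub_qpow_ge n : (1 <= n)%nat -> (1 - Cmod q <= Cmod (1 - qpow q n))%R.
Proof.
  intros Hn. pose proof (Cmod_triangle (1 - qpow q n) (qpow q n)) as H.
  replace (1 - qpow q n + qpow q n) with (RtoC 1) in H by ring.
  rewrite Cmod_1 in H. pose proof (Cmod_qpow_le n Hn). lra.
Qed.

Lemma Cmod_qterm_le t s n : (1 <= n)%nat ->
  (Cmod (qterm q t s n) <= Cmod q ^ (n * t) * (/ (1 - Cmod q)) ^ s)%R.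
Proof.
  intros Hn. pose proof (one_sub_qpow_neq0 n Hn) as H.
  pose proof (Cmod_one_sub_qpow_ge n Hn).
  unfold qterm, qpow, Cdiv. rewrite Cmod_mult, Cmod_inv by (apply pow_n_neq0, H).
  change (Cmod (q ^ (n * t)) * / Cmod ((1 - q ^ n) ^ s)
          <= Cmod q ^ (n * t) * (/ (1 - Cmod q)) ^ s)%R.
  rewrite !Cmod_pow, pow_inv.
  apply Rmult_le_compat_l; [apply pow_le, Cmod_ge_0|].
  apply Rinv_le_contravar; [apply pow_lt; lra|].
  apply pow_incr. split; [lra | exact H0].
Qed.

Lemma qtrunc_exp_growth (c : R) : (1 < c)%R -> forall ts,
  exists K, (0 <= K)%R /\ forall n, (Cmod (qtrunc q ts n) <= K * c ^ n)%R.
Proof.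
  intros Hc. induction ts as [|[t s] ts [K [HK IH]]].
  - exists 1%R. split; [lra|]. intros n. simpl. rewrite Cmod_1.
    pose proof (pow_R1_Rle c n). lra.
  - set (A := (/ (1 - Cmod q))%R).
    assert (HA : (0 <= A ^ s)%R)
      by (apply pow_le, Rlt_le, Rinv_0_lt_compat; lra).
    exists (A ^ s * K / (c - 1))%R.
    assert (HM : (0 <= A ^ s * K / (c - 1))%R)
      by (apply Rmult_le_pos; [nra | apply Rlt_le, Rinv_0_lt_compat; lra]).
    split; [exact HM|]. apply Cmod_sumC_le_geometric; [exact HM|].
    replace (A ^ s * K / (c - 1) * (c - 1))%R with (A ^ s * K)%R by (field; lra).
    intros [|k].
    + rewrite Cmod_0, pow_O, Rmult_1_r. now apply Rmult_le_pos.
    + rewrite Cmod_mult, Rmult_assoc.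
      apply Rmult_le_compat; [apply Cmod_ge_0 | apply Cmod_ge_0 | | apply IH].
      eapply Rle_trans; [apply Cmod_qterm_le; lia|].
      fold A. rewrite <- (Rmult_1_l (A ^ s)) at 2. apply Rmult_le_compat_r; [exact HA|].
      rewrite <- (pow1 (S k * t)). apply pow_incr. pose proof (Cmod_ge_0 q). lra.
Qed.

Lemma ex_series_build B bs t s ts :
  Forall2 acts_by_qterm (B :: bs) ((t, s) :: ts) -> (1 <= t)%nat ->
  ex_series (build (B :: bs)).
Proof.
  intros H Ht. inversion H as [|? ? ? ? HB Hbs]; subst.
  set (r := Cmod q) in *. set (A := (/ (1 - r))%R).
  assert (Hr : (0 <= r)%R) by apply Cmod_ge_0.
  set (c := ((3 - r) / 2)%R).
  assert (Hc : (1 < c)%R) by (unfold c; lra).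
  assert (Hrc : (0 <= r * c < 1)%R) by (unfold c; split; nra).
  assert (HA : (0 <= A ^ s)%R) by (apply pow_le, Rlt_le, Rinv_0_lt_compat; lra).
  destruct (qtrunc_exp_growth c Hc ts) as [K [HK Hgrowth]].
  apply (@ex_series_le C_AbsRing C_CompleteNormedModule _ (fun n => A ^ s * K * (r * c) ^ n)%R).
  - intros [|n].
    + change (Cmod (B (ymul (build bs)) O) <= A ^ s * K * (r * c) ^ 0)%R.
      rewrite (proj1 (HB _)), Cmod_0. simpl. nra.
    + change (Cmod (B (ymul (build bs)) (S n)) <= A ^ s * K * (r * c) ^ S n)%R.
      rewrite (proj2 (HB _)) by lia. unfold ymul. simpl fst; simpl snd.
      rewrite (sumC_build _ _ Hbs) by lia. rewrite Cmod_mult, Rpow_mult_distr.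
      replace (A ^ s * K * (r ^ S n * c ^ S n))%R with ((r ^ S n * A ^ s) * (K * c ^ S n))%R
        by ring.
      apply Rmult_le_compat; [apply Cmod_ge_0 | apply Cmod_ge_0 | | apply Hgrowth].
      eapply Rle_trans; [apply Cmod_qterm_le; lia|].
      apply Rmult_le_compat_r; [exact HA|].
      replace (S n * t)%nat with (S n + S n * (t - 1))%nat by nia.
      rewrite pow_add. pose proof (pow_le r (S n) Hr).
      assert (r ^ (S n * (t - 1)) <= 1)%R
        by (rewrite <- (pow1 (S n * (t - 1))); apply pow_incr; unfold r in *; lra).
      fold r. nra.
  - apply (ex_series_ext (fun n => scal (A ^ s * K)%R ((r * c) ^ n)%R)); [reflexivity|].
    apply (@ex_series_scal_l R_AbsRing R_NormedModule), ex_series_geom.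
    rewrite Rabs_pos_eq; lra.
Qed.

Lemma value_at_1_build_frakz_is B bs t s ts :
  Forall2 acts_by_qterm (B :: bs) ((t, s) :: ts) -> (1 <= t)%nat ->
  exists z, value_at_1 (build (B :: bs)) z /\ frakz_is q ((t, s) :: ts) z.
Proof.
  intros H Ht. destruct (ex_series_build B bs t s ts H Ht) as [z Hz].
  exists z. split; [exact Hz | exact (frakz_is_of_value_at_1 _ _ z H Hz)].
Qed.

Lemma type_claim_build B bs t s ts :
  Forall2 acts_by_qterm (B :: bs) ((t, s) :: ts) -> (1 <= t)%nat ->
  type_claim q ((t, s) :: ts) (build (B :: bs)).
Proof.
  intros H Ht. destruct (value_at_1_build_frakz_is B bs t s ts H Ht) as [z [Hz Hfrakz]].
  exists z. split; [exact Hz | split; [exact Hfrakz | exact (zeta_is_of_frakz_is _ _ Hfrakz)]].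
Qed.

End NestedSeries.

Lemma Forall2_map_of_Forall {X Y W : Type} (P : X -> Prop) (Rel : Y -> W -> Prop)
  (f : X -> Y) (g : X -> W) (l : list X) :
  (forall x, P x -> Rel (f x) (g x)) -> List.Forall P l -> Forall2 Rel (map f l) (map g l).
Proof. intros H. induction 1; constructor; auto. Qed.

Lemma regularized_blocks_act (q : C) (ss : list nat) (rs : list bool) :
  (Cmod q < 1)%R -> List.Forall (fun x => (1 <= x)%nat) ss ->
  Forall2 (acts_by_qterm q)
    (map (fun p : nat * bool => if snd p then Rop q else blockI q (fst p)) (combine ss rs))
    (map (fun p : nat * bool => if snd p then (1, 1) else (fst p - 1, fst p))%nat
         (combine ss rs)).
Proof.
  intros hq Hss. apply (Forall2_map_of_Forall (fun p : nat * bool => (1 <= fst p)%nat)).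
  - intros [x []] Hx; [apply Rop_acts | apply blockI_acts]; assumption.
  - apply Forall_forall. intros [x b] Hp. apply in_combine_l in Hp.
    exact (proj1 (Forall_forall _ _) Hss x Hp).
Qed.

Theorem corollary6p4 (q : C) (s1 : nat) (ss : list nat) :
  (Cmod q < 1)%R ->
  (1 <= s1)%nat -> List.Forall (fun x => (1 <= x)%nat) ss ->
  (* type II *)
  type_claim q (tII (s1 :: ss)) (build (map (blockII q) (s1 :: ss)))
  (* type III *)
  /\ type_claim q ((1, s1)%nat :: map (fun x => (0, x)%nat) ss)
                  (build (blockIII1 q s1 :: map (blockIII q) ss))
  (* types I and IV, when s1 >= 2 *)
  /\ ((2 <= s1)%nat ->
        type_claim q (tI (s1 :: ss)) (build (map (blockI q) (s1 :: ss)))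
     /\ type_claim q ((s1 - 1, s1)%nat :: tII ss)
                     (build (blockI q s1 :: map (blockII q) ss)))
  (* regularized type I~ : any set of positions replaced by a single R *)
  /\ (forall (b1 : bool) (rs : list bool),
        length rs = length ss -> (b1 = false -> (2 <= s1)%nat) ->
        exists z : C, value_at_1 (FIreg q (s1 :: ss) (b1 :: rs)) z
                      /\ frakz_is q (tIreg (s1 :: ss) (b1 :: rs)) z)
  (* regularized type IV~ : first block replaced by a single R *)
  /\ (exists z : C, value_at_1 (build (Rop q :: map (blockII q) ss)) z
                    /\ frakz_is q ((1, 1)%nat :: tII ss) z)
.
Proof.
  intros hq Hs1 Hss.
  pose proof (Forall2_map_of_Forall _ _ _ (fun x => (x, x)) _ (blockII_acts q hq) Hss) as HII.
  pose proof (Forall2_map_of_Forall _ _ _ (fun x => (0, x)%nat) _ (blockIII_acts q hq) Hss)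
    as HIII.
  pose proof (Forall2_map_of_Forall _ _ _ (fun x => (x - 1, x)%nat) _ (blockI_acts q hq) Hss)
    as HI.
  unfold tI, tII. cbn [map].
  split; [|split; [|split; [|split]]].
  - apply (type_claim_build q hq); [constructor; auto using blockII_acts | lia].
  - apply (type_claim_build q hq); [constructor; auto using blockIII1_acts | lia].
  - intros Hs1'.
    split; apply (type_claim_build q hq); try lia; constructor; auto using blockI_acts.
  - (* combine truncates FIreg and tIreg alike *)
    intros b1 rs _ Hb1. unfold FIreg, tIreg. cbn [combine map].
    pose proof (regularized_blocks_act q ss rs hq Hss) as Hreg.
    destruct b1; apply (value_at_1_build_frakz_is q hq).
    + constructor; [apply Rop_acts |]; assumption.
    + lia.
    + constructor; [apply blockI_acts |]; assumption.
    + specialize (Hb1 eq_refl). cbn. lia.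
  - apply (value_at_1_build_frakz_is q hq); [constructor; auto using Rop_acts | lia].
Qed.
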